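(* Consider the Hilbert-style system $\mathsf{Sup}$ over the language $\mathcal{L}$ described in the context, consisting of all classical propositional tautologies (instantiated with formulas of $\mathcal{L}$), Modus Ponens, the axiom schemata $\mathbf{ID}$, $\mathbf{ST}$, $\mathbf{SH}$, $\mathbf{LL+}$ and the rules $\mathbf{RCK}$ and $\mathbf{S5_F}$. Then, for all propositional formulas $\varphi,\psi,\chi,\varphi_1,\varphi_2$: (i) (RW) if $\vdash \varphi_1\to\varphi_2$ then $\vdash (\psi\rightsquigarrow\varphi_1)\to(\psi\rightsquigarrow\varphi_2)$; (ii) (LLE) if $\vdash \varphi\leftrightarrow\psi$ then $\vdash (\varphi\rightsquigarrow\chi)\leftrightarrow(\psi\rightsquigarrow\chi)$; (iii) (AND) $\vdash ((\varphi\rightsquigarrow\psi)\land(\varphi\rightsquigarrow\chi))\to(\varphi\rightsquigarrow(\psi\land\chi))$; (iv) (CUT) $\vdash ((\varphi\rightsquigarrow\psi)\land((\varphi\land\psi)\rightsquigarrow\chi))\to(\varphi\rightsquigarrow\chi)$; (v) (OR) $\vdash ((\varphi\rightsquigarrow\psi)\land(\chi\rightsquigarrow\psi))\to((\varphi\lor\chi)\rightsquigarrow\psi)$. Here $\vdash$ denotes derivability in $\mathsf{Sup}$.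
   Context: Fix a countable set of propositional variables. Propositional formulas are given by $\varphi ::= \bot \mid p \mid \varphi\land\varphi\mid\varphi\lor\varphi\mid\varphi\to\varphi\mid\varphi\leftrightarrow\varphi\mid\neg\varphi$. The language $\mathcal{L}$ consists of formulas $\alpha ::= \varphi \mid \varphi\rightsquigarrow\varphi \mid B(\alpha)\mid \alpha*\alpha\mid\neg\alpha$ ($*\in\{\land,\lor,\to,\leftrightarrow\}$), where $\varphi$ ranges over propositional formulas; so $\rightsquigarrow$ (support) is only applied to two propositional formulas. In the axioms and rules below $\varphi,\psi,\chi,\varphi_i,\psi_i$ range over propositional formulas, and rule applications must produce formulas of $\mathcal{L}$. Axioms: $\mathbf{ID}$: $\varphi\rightsquigarrow\varphi$; $\mathbf{ST}$: $(\varphi\rightsquigarrow\bot)\to\neg\varphi$; $\mathbf{SH}$: $((\psi\land\chi)\rightsquigarrow\varphi)\to(\psi\rightsquigarrow(\chi\to\varphi))$; $\mathbf{LL+}$: $(\neg(\varphi\leftrightarrow\psi)\rightsquigarrow\bot)\to((\varphi\rightsquigarrow\chi)\leftrightarrow(\psi\rightsquigarrow\chi))$. Rule $\mathbf{RCK}$: from $(\varphi_1\land\dots\land\varphi_n)\to\varphi_{n+1}$ infer $((\psi\rightsquigarrow\varphi_1)\land\dots\land(\psi\rightsquigarrow\varphi_n))\to(\psi\rightsquigarrow\varphi_{n+1})$. Rule $\mathbf{S5_F}$: from $(\ell_1\land\dots\land\ell_n)\to\chi$ infer $(\ell_1\land\dots\land\ell_n)\to(\neg\chi\rightsquigarrow\bot)$,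 where each $\ell_j$ is either $\varphi_j\rightsquigarrow\psi_j$ or $\neg(\varphi_j\rightsquigarrow\psi_j)$ and $\chi$ is propositional. *)

From Stdlib Require Import List.
Import ListNotations.

Inductive pform : Type :=
| PBot : pform
| PVar : nat -> pform
| PAnd : pform -> pform -> pform
| POr  : pform -> pform -> pform
| PImp : pform -> pform -> pform
| PIff : pform -> pform -> pform
| PNeg : pform -> pform.

(* The language L.  Propositional formulas are embedded via [emb] below, so
   that the boolean connectives of L and of propositional formulas coincide. *)
Inductive lform : Type :=
| LBot : lform
| LVar : nat -> lform
| LSup : pform -> pform -> lform          (* phi ~> psi, phi psi propositional *)
| LB   : lform -> lform
| LAnd : lform -> lform -> lform
| LOr  : lform -> lform -> lform
| LImp : lform -> lform -> lform
| LIff : lform -> lform -> lform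
| LNeg : lform -> lform.

Fixpoint emb (p : pform) : lform :=
  match p with
  | PBot => LBot
  | PVar n => LVar n
  | PAnd a b => LAnd (emb a) (emb b)
  | POr a b => LOr (emb a) (emb b)
  | PImp a b => LImp (emb a) (emb b)
  | PIff a b => LIff (emb a) (emb b)
  | PNeg a => LNeg (emb a)
  end.

(* Classical valuations: the atoms of L (w.r.t. the boolean connectives) are
   propositional variables, support formulas and B-formulas. *)
Record valuation : Type := {
  v_var : nat -> bool;
  v_sup : pform -> pform -> bool;
  v_B   : lform -> bool }.

Fixpoint leval (v : valuation) (a : lform) : bool :=
  match a with
  | LBot => false
  | LVar n => v_var v n
  | LSup p q => v_sup v p q
  | LB b => v_B v b
  | LAnd x y => leval v x && leval v y
  | LOr x y => leval v x || leval v y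
  | LImp x y => implb (leval v x) (leval v y)
  | LIff x y => Bool.eqb (leval v x) (leval v y)
  | LNeg x => negb (leval v x)
  end.

Definition tautology (a : lform) : Prop := forall v, leval v a = true.

Fixpoint bigand (x : lform) (xs : list lform) : lform :=
  match xs with
  | [] => x
  | y :: ys => LAnd x (bigand y ys)
  end.

Definition literal (l : bool * pform * pform) : lform :=
  match l with
  | (true, p, q) => LSup p q
  | (false, p, q) => LNeg (LSup p q)
  end.

Inductive prov : lform -> Prop :=
| P_taut : forall a, tautology a -> prov a
| P_MP : forall a b, prov (LImp a b) -> prov a -> prov b
| P_ID : forall p, prov (LSup p p)
| P_ST : forall p, prov (LImp (LSup p PBot) (LNeg (emb p)))
| P_SH : forall p q c,
    prov (LImp (LSup (PAnd q c) p) (LSup q (PImp c p)))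
| P_LLp : forall p q c,
    prov (LImp (LSup (PNeg (PIff p q)) PBot) (LIff (LSup p c) (LSup q c)))
| P_RCK : forall (psi p1 pn1 : pform) (ps : list pform),
    prov (LImp (bigand (emb p1) (map emb ps)) (emb pn1)) ->
    prov (LImp (bigand (LSup psi p1) (map (LSup psi) ps)) (LSup psi pn1))
| P_S5F : forall (l1 : bool * pform * pform) (ls : list (bool * pform * pform))
                 (chi : pform),
    prov (LImp (bigand (literal l1) (map literal ls)) (emb chi)) ->
    prov (LImp (bigand (literal l1) (map literal ls)) (LSup (PNeg chi) PBot)).

(* RW, AND and the modus-ponens steps below are instances of RCK.  LLE is
   LL+ once S5_F, applied with the axiom ID as its literal premise, has turned
   a provable [phi <-> psi] into [~(phi <-> psi) ~> bot].  For CUT and OR,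
   SH moves part of the antecedent of [~>] into the consequent; for OR the
   antecedent [phi] is first replaced by the equivalent [(phi \/ chi) /\ phi]
   using LLE. *)
From Stdlib Require Import List.
Import ListNotations.

Ltac solve_tautology :=
  intro; simpl;
  repeat match goal with
         | |- context [leval ?v ?x] => destruct (leval v x)
         | |- context [v_sup ?v ?x ?y] => destruct (v_sup v x y)
         end; reflexivity.

Lemma prov_taut_mp (a b : lform) : tautology (LImp a b) -> prov a -> prov b.
Proof. intros Hab Ha. exact (P_MP a b (P_taut _ Hab) Ha). Qed.

Lemma prov_taut_mp2 (a b c : lform) :
  tautology (LImp a (LImp b c)) -> prov a -> prov b -> prov c.
Proof. intros Habc Ha. exact (P_MP b c (P_MP _ _ (P_taut _ Habc) Ha)). Qed.

Lemma prov_and (a b : lform) : prov a -> prov b -> prov (LAnd a b).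
Proof. apply prov_taut_mp2; solve_tautology. Qed.

Lemma prov_imp_trans (a b c : lform) :
  prov (LImp a b) -> prov (LImp b c) -> prov (LImp a c).
Proof. apply prov_taut_mp2; solve_tautology. Qed.

Lemma prov_sup_mono (psi p1 p2 : pform) :
  prov (emb (PImp p1 p2)) -> prov (LImp (LSup psi p1) (LSup psi p2)).
Proof. exact (P_RCK psi p1 p2 []). Qed.

Lemma prov_sup_and (p q c : pform) :
  prov (LImp (LAnd (LSup p q) (LSup p c)) (LSup p (PAnd q c))).
Proof. apply (P_RCK p q (PAnd q c) [c]); apply P_taut; solve_tautology. Qed.

Lemma prov_sup_mp (p q c : pform) :
  prov (LImp (LAnd (LSup p q) (LSup p (PImp q c))) (LSup p c)).
Proof. apply (P_RCK p q c [PImp q c]); apply P_taut; solve_tautology. Qed.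

Lemma prov_sup_bot_neg (chi : pform) :
  prov (emb chi) -> prov (LSup (PNeg chi) PBot).
Proof.
  intro Hchi.
  assert (Hid_chi : prov (LImp (literal (true, chi, chi)) (emb chi))).
  { apply (prov_taut_mp (emb chi)); [solve_tautology | exact Hchi]. }
  exact (P_MP _ _ (P_S5F (true, chi, chi) [] chi Hid_chi) (P_ID chi)).
Qed.

Lemma prov_sup_lle (p q c : pform) :
  prov (emb (PIff p q)) -> prov (LIff (LSup p c) (LSup q c)).
Proof. intro Hpq. exact (P_MP _ _ (P_LLp p q c) (prov_sup_bot_neg _ Hpq)). Qed.

Lemma prov_sup_shift (p q c : pform) :
  prov (emb (PImp p q)) -> prov (LImp (LSup p c) (LSup q (PImp p c))).
Proof.
  intro Hpq.
  assert (Hp_qp : prov (emb (PIff p (PAnd q p)))).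
  { apply (prov_taut_mp (emb (PImp p q))); [solve_tautology | exact Hpq]. }
  apply (prov_imp_trans _ (LSup (PAnd q p) c)); [| exact (P_SH c q p)].
  apply (prov_taut_mp (LIff (LSup p c) (LSup (PAnd q p) c)));
    [solve_tautology | exact (prov_sup_lle _ _ c Hp_qp)].
Qed.

Lemma prov_sup_cut (p q c : pform) :
  prov (LImp (LAnd (LSup p q) (LSup (PAnd p q) c)) (LSup p c)).
Proof.
  refine (prov_taut_mp2 _ _ _ _ (P_SH c p q) (prov_sup_mp p q c)).
  solve_tautology.
Qed.

Lemma prov_sup_or (p q c : pform) :
  prov (LImp (LAnd (LSup p q) (LSup c q)) (LSup (POr p c) q)).
Proof.
  assert (Hp : prov (LImp (LSup p q) (LSup (POr p c) (PImp p q)))).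
  { apply prov_sup_shift, P_taut; solve_tautology. }
  assert (Hc : prov (LImp (LSup c q) (LSup (POr p c) (PImp c q)))).
  { apply prov_sup_shift, P_taut; solve_tautology. }
  assert (Hcases : prov (LImp (bigand (LSup (POr p c) (PImp p q))
                                   [LSup (POr p c) (PImp c q);
                                    LSup (POr p c) (POr p c)])
                           (LSup (POr p c) q))).
  { apply (P_RCK (POr p c) (PImp p q) q [PImp c q; POr p c]).
    apply P_taut; solve_tautology. }
  refine (prov_taut_mp _ _ _
           (prov_and _ _ Hp (prov_and _ _ Hc
              (prov_and _ _ Hcases (P_ID (POr p c)))))).
  solve_tautology.
Qed.

Theorem theorem1 :
  (forall psi p1 p2 : pform,
      prov (emb (PImp p1 p2)) ->
      prov (LImp (LSup psi p1) (LSup psi p2))) /\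
  (forall p q c : pform,
      prov (emb (PIff p q)) ->
      prov (LIff (LSup p c) (LSup q c))) /\
  (forall p q c : pform,
      prov (LImp (LAnd (LSup p q) (LSup p c)) (LSup p (PAnd q c)))) /\
  (forall p q c : pform,
      prov (LImp (LAnd (LSup p q) (LSup (PAnd p q) c)) (LSup p c))) /\
  (forall p q c : pform,
      prov (LImp (LAnd (LSup p q) (LSup c q)) (LSup (POr p c) q))).
Proof.
  exact (conj prov_sup_mono (conj prov_sup_lle (conj prov_sup_and
           (conj prov_sup_cut prov_sup_or)))).
Qed.
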